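(* Let $(X,\mathcal{B},\mu)$ be a standard probability space and $K$ a subset of $\mathfrak{P}$. Then $$h^*_\mu(K)=\sup_{\mathcal{A}\in\mathcal{S}_K}h_\mu(\mathcal{A}),$$ where $\mathcal{S}_K$ is the collection of all sequences $(\alpha_i)_{i=1}^\infty$ of elements of $K$; moreover there is some $\mathcal{A}\in\mathcal{S}_K$ with $h^*_\mu(K)=h_\mu(\mathcal{A})$.
   Context: $\mathfrak{P}$ is the set of finite measurable partitions of $X$ (identified mod $0$); $\alpha\vee\beta=\{A\cap B\colon A\in\alpha,B\in\beta\}$; $H_\mu(\alpha)=-\sum_{A\in\alpha}\mu(A)\log\mu(A)$. For a sequence $\mathcal{A}=(\alpha_i)$ in $\mathfrak{P}$, $h_\mu(\mathcal{A})=\limsup_{n\to\infty}\frac1nH_\mu(\bigvee_{i=1}^n\alpha_i)$. For $K\subset\mathfrak{P}$, $P^*_{K,\mu}(n)=\sup_{\alpha_1,\dots,\alpha_n\in K}H_\mu(\bigvee_{i=1}^n\alpha_i)$ and $h^*_\mu(K)=\limsup_{n\to\infty}\frac1nP^*_{K,\mu}(n)$. *)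

From HB Require Import structures.
From mathcomp Require Import all_boot all_order all_algebra.
From mathcomp Require Import all_classical all_reals all_analysis.
Set Implicit Arguments. Unset Strict Implicit. Unset Printing Implicit Defensive.
Import Order.TTheory GRing.Theory Num.Theory.
Local Open Scope classical_set_scope.
Local Open Scope ring_scope.

Section Entropy.
Context {d : measure_display} {X : measurableType d} {R : realType}.

(* Standard probability space: the sigma-algebra of X is the Borel
   sigma-algebra of a complete separable metric on X (standard Borel space),
   carrying the probability measure mu. *)
Definition standard_prob_space (mu : probability X R) : Prop :=
  exists dm : X -> X -> R,
    (forall x y, 0 <= dm x y) /\
        (forall x y, dm x y = 0 <-> x = y) /\
        (forall x y, dm x y = dm y x) /\
        (forall x y z, dm x z <= dm x y + dm y z) /\
        (forall u : nat -> X,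
           (forall e : R, 0 < e -> exists N, forall m n, (N <= m)%N -> (N <= n)%N ->
              dm (u m) (u n) < e) ->
           exists l, forall e : R, 0 < e -> exists N, forall n, (N <= n)%N -> dm (u n) l < e) /\
        (exists s : nat -> X, forall x (e : R), 0 < e -> exists n, dm x (s n) < e) /\
        (forall A : set X, measurable A <->
           smallest (sigma_algebra setT)
             (fun B : set X => exists x (r : R), B = [set y | dm x y < r]) A).

Definition is_partition (P : seq (set X)) : Prop :=
  [/\ (forall A, A \in P -> measurable A),
      (forall i j, (i < size P)%N -> (j < size P)%N -> i <> j ->
          nth set0 P i `&` nth set0 P j = set0) &
      (forall x, exists2 A, A \in P & A x)].

Definition pjoin (a b : seq (set X)) : seq (set X) :=
  [seq A `&` B | A <- a, B <- b].

Definition pjoinn (alpha : nat -> seq (set X)) (n : nat) : seq (set X) :=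
  foldr pjoin [:: setT] [seq alpha i | i <- iota 0 n].

(* H_mu(alpha) = - sum_{A in alpha} mu(A) log mu(A)  (0 log 0 = 0 since ln 0 = 0) *)
Definition Hmu (mu : probability X R) (P : seq (set X)) : R :=
  - \sum_(A <- P) fine (mu A) * ln (fine (mu A)).

Definition hmu (mu : probability X R) (alpha : nat -> seq (set X)) : \bar R :=
  limn_esup (fun n => (Hmu mu (pjoinn alpha n) / n%:R)%:E).

Definition Pstar (mu : probability X R) (K : set (seq (set X))) (n : nat) : \bar R :=
  ereal_sup [set (Hmu mu (pjoinn alpha n))%:E |
             alpha in [set alpha : nat -> seq (set X) | forall i, (i < n)%N -> K (alpha i)]].

Definition hstar (mu : probability X R) (K : set (seq (set X))) : \bar R :=
  limn_esup (fun n => (Pstar mu K n * (n%:R)^-1%:E)%E).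

Definition seqs_in (K : set (seq (set X))) : set (nat -> seq (set X)) :=
  [set alpha | forall i, K (alpha i)].

End Entropy.

From HB Require Import structures.
From mathcomp Require Import all_boot all_order all_algebra.
From mathcomp Require Import all_classical all_reals all_analysis.
From mathcomp Require Import lra zify.
Set Implicit Arguments. Unset Strict Implicit. Unset Printing Implicit Defensive.
Import Order.TTheory GRing.Theory Num.Theory.
Local Open Scope classical_set_scope.
Local Open Scope ring_scope.

(* Every h_mu(A) with A in S_K is at most h*_mu(K), since the n-th term of
   its limsup is bounded by P*_{K,mu}(n)/n.  Conversely, refining a partition
   does not decrease its entropy, so a block a_{N+1} v ... v a_{N+n} has
   entropy at most H_mu(a_1 v ... v a_{N+n}).  Take reals s_k < h*_mu(K)
   converging to h*_mu(K) and build A by concatenating blocks of elements of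
   K: the block starting at N_k is chosen so long that its entropy exceeds
   s_k (N_k + n_k), which is possible because P*(n)/n exceeds some t_k > s_k
   for infinitely many n.  Then H_mu(a_1 v ... v a_{N_k+n_k}) / (N_k+n_k)
   >= s_k for all k, so h_mu(A) >= h*_mu(K). *)

Section mul_ln.
Variable R : realType.

Lemma mul_ln_le (a b : R) : 0 <= a -> a <= b -> a * ln a <= a * ln b.
Proof.
move=> a_ge0 ab; have [->|a_neq0] := eqVneq a 0; first by rewrite !mul0r.
have a_gt0 : 0 < a by rewrite lt_def a_neq0 a_ge0.
by rewrite ler_wpM2l // ler_ln // posrE (lt_le_trans a_gt0).
Qed.

Lemma mul_ln_superadditive (a b : R) : 0 <= a -> 0 <= b ->
  a * ln a + b * ln b <= (a + b) * ln (a + b).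
Proof.
move=> a_ge0 b_ge0; rewrite mulrDl.
by apply: lerD; apply: mul_ln_le; rewrite // ?lerDl ?lerDr.
Qed.

Lemma sum_mul_ln_le (I : Type) (s : seq I) (g : I -> R) : (forall i, 0 <= g i) ->
  \sum_(i <- s) g i * ln (g i) <= (\sum_(i <- s) g i) * ln (\sum_(i <- s) g i).
Proof.
move=> g_ge0; elim: s => [|i s IHs]; first by rewrite !big_nil mul0r.
rewrite !big_cons; apply: le_trans (mul_ln_superadditive (g_ge0 i) _).
  by rewrite lerD2l.
exact: sumr_ge0.
Qed.

End mul_ln.

Section partition_entropy.
Context {d : measure_display} {X : measurableType d} {R : realType}.
Variable mu : probability X R.
Implicit Types (a b : seq (set X)) (alpha : nat -> seq (set X)).

Lemma measure_partitionE a (B : set X) : is_partition a -> measurable B ->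
  mu B = (\sum_(A <- a) mu (A `&` B))%E.
Proof.
case=> a_meas a_disj a_cover mB.
have B_bigcup : B = \big[setU/set0]_(i < size a) (nth set0 a i `&` B).
  rewrite -(bigcup_mkord _ (fun i => nth set0 a i `&` B)).
  apply/seteqP; split => [x Bx|x [i _ [_ Bx]]] //.
  have [A Aa Ax] := a_cover x.
  by exists (index A a); rewrite /= ?index_mem ?nth_index.
rewrite (big_nth set0) big_mkord {1}B_bigcup.
rewrite (@measure_semi_additive_ord_I _ _ _ mu (fun i => nth set0 a i `&` B)) //.
- by move=> i ia; apply: measurableI => //; apply/a_meas/mem_nth.
- apply/trivIsetP => i j /= ia ja /eqP ij.
  by rewrite setIACA setIid a_disj // set0I.
- by rewrite -B_bigcup.
Qed.

Lemma fine_measure_partitionE a (B : set X) : is_partition a -> measurable B ->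
  fine (mu B) = \sum_(A <- a) fine (mu (A `&` B)).
Proof.
move=> a_part mB; have [a_meas _ _] := a_part.
rewrite (measure_partitionE a_part mB) big_seq.
rewrite (eq_bigr (fun A => (fine (mu (A `&` B)))%:E)) ?sumEFin -?big_seq //.
by move=> A Aa; rewrite fineK // fin_num_measure //; apply: measurableI => //;
  exact: a_meas.
Qed.

Lemma Hmu_pjoin_ge a b : is_partition a -> (forall B, B \in b -> measurable B) ->
  Hmu mu b <= Hmu mu (pjoin a b).
Proof.
move=> a_part b_meas.
rewrite /Hmu /pjoin lerN2 big_allpairs_dep /= exchange_big /= !big_seq.
apply: ler_sum => B Bb; rewrite (fine_measure_partitionE a_part (b_meas _ Bb)).
by apply: sum_mul_ln_le => A; apply/fine_ge0/measure_ge0.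
Qed.

Lemma pjoinnS alpha n :
  pjoinn alpha n.+1 = pjoin (alpha 0%N) (pjoinn (fun i => alpha i.+1) n).
Proof. by rewrite /pjoinn /= -add1n iotaDl -map_comp. Qed.

Lemma eq_pjoinn alpha alpha' n : (forall i, (i < n)%N -> alpha i = alpha' i) ->
  pjoinn alpha n = pjoinn alpha' n.
Proof.
move=> eq_alpha; rewrite /pjoinn; congr foldr; apply/eq_in_map => i.
by rewrite mem_iota => /andP[_ /eq_alpha].
Qed.

Lemma pjoinn_measurable alpha n : (forall i A, A \in alpha i -> measurable A) ->
  forall C, C \in pjoinn alpha n -> measurable C.
Proof.
elim: n alpha => [|n IHn] alpha alpha_meas C.
  by rewrite /pjoinn /= inE => /eqP ->.
rewrite pjoinnS => /allpairsP[[A B] /= [Aa Bb ->]].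
apply: measurableI; first exact: (alpha_meas 0%N).
exact: (IHn _ (fun i => alpha_meas i.+1)).
Qed.

Lemma Hmu_pjoinn_shift_le alpha N n : (forall i, is_partition (alpha i)) ->
  Hmu mu (pjoinn (fun j => alpha (N + j)%N) n) <= Hmu mu (pjoinn alpha (N + n)).
Proof.
elim: N alpha => [|N IHN] alpha alpha_part //.
rewrite addSn pjoinnS; apply: le_trans (IHN (fun i => alpha i.+1) _) _ => //.
apply: Hmu_pjoin_ge => //; apply: pjoinn_measurable => i A.
by have [alpha_meas _ _] := alpha_part i.+1; exact: alpha_meas.
Qed.

End partition_entropy.

Section limn_esup.
Context {R : realType}.
Local Open Scope ereal_scope.
Implicit Types (u v : (\bar R)^nat) (x y : \bar R).

Lemma limn_esupE u : limn_esup u = ereal_inf (range (esups u)).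
Proof. by rewrite limn_esup_lim; apply/cvg_lim/cvg_esups_inf. Qed.

Lemma lt_limn_esup_frequently u x : x < limn_esup u ->
  forall M, exists2 n, (M <= n)%N & x < u n.
Proof.
rewrite limn_esupE => x_lt M.
have : x < esups u M.
  by apply: lt_le_trans x_lt _; apply: ereal_inf_lbound; exists M.
by move=> /ereal_sup_gt[_ [n /= Mn <-] x_lt_u]; exists n.
Qed.

Lemma frequently_le_limn_esup u x : (forall M, exists2 n, (M <= n)%N & x <= u n) ->
  x <= limn_esup u.
Proof.
move=> x_le; rewrite limn_esupE; apply/ereal_infP => _ [M _ <-].
have [n Mn x_le_u] := x_le M.
by apply: le_trans x_le_u _; apply: ereal_sup_ubound; exists n.
Qed.

Lemma le_limn_esup u v : (forall n, u n <= v n) -> limn_esup u <= limn_esup v.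
Proof.
move=> uv; rewrite [leRHS]limn_esupE; apply/ereal_infP => _ [M _ <-].
rewrite limn_esupE; apply: le_trans (ereal_inf_lbound _) _; first by exists M.
apply/ereal_supP => _ [n /= Mn <-]; apply: le_trans (uv n) _.
by apply: ereal_sup_ubound; exists n.
Qed.

Lemma lee_EFin_lt x y : (forall r : R, r%:E < x -> r%:E <= y) -> x <= y.
Proof.
case: x => [x| |] x_le; case: y x_le => [y| |] x_le //; rewrite ?leey ?leNye //.
- rewrite lee_fin leNgt; apply/negP => yx.
  by have := x_le ((x + y) / 2)%R; rewrite lte_fin lee_fin => /(_ ltac:(lra)); lra.
- by have := x_le (x - 1)%R; rewrite lte_fin => /(_ ltac:(lra)).
- by have := x_le (y + 1)%R; rewrite ltry lee_fin => /(_ isT) ?; exfalso; lra.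
- by have := x_le 0%R; rewrite ltry => /(_ isT).
Qed.

Lemma lte_EFin_dense (r : R) x : r%:E < x -> exists2 t : R, (r < t)%R & t%:E < x.
Proof.
case: x => [x| |] // rx; last by exists (r + 1)%R; rewrite ?ltry //; lra.
rewrite lte_fin in rx; by exists ((r + x) / 2)%R; rewrite ?lte_fin; lra.
Qed.

Lemma EFin_approx_below x : -oo < x -> exists s : nat -> R,
  (forall k, (s k)%:E < x) /\
  forall r : R, r%:E < x -> exists k0, forall k, (k0 <= k)%N -> (r <= s k)%R.
Proof.
case: x => [x| |] // _.
- exists (fun k => x - k.+1%:R^-1)%R; split => [k|r].
    by rewrite lte_fin ltrBlDr ltrDl invr_gt0.
  rewrite lte_fin -subr_gt0 => xr_gt0.
  exists (Num.truncn (x - r)^-1) => k k_ge.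
  have T_lt : (1 < (Num.truncn (x - r)^-1).+1%:R * (x - r))%R.
    by rewrite -ltr_pdivrMr // div1r truncnS_gt.
  rewrite lerBrDr -lerBrDl -div1r ler_pdivrMr //; apply: le_trans (ltW T_lt) _.
  by rewrite [leRHS]mulrC ler_pM2r // ler_nat.
- exists (fun k => k%:R); split => [k|r _]; first exact: ltry.
  exists (Num.truncn r).+1 => k k_ge.
  by apply: le_trans (ltW (truncnS_gt r)) _; rewrite ler_nat.
Qed.

End limn_esup.

Section concat_blocks.
Variable A : Type.
(* [block k N] is the k-th block, to be placed at position N: its length,
   which must be positive, and its entries. *)
Variable block : nat -> nat -> nat * (nat -> A).
Hypothesis block_length_gt0 : forall k N, (0 < (block k N).1)%N.

Fixpoint block_start k :=
  if k is k'.+1 then (block_start k' + (block k' (block_start k')).1)%N else 0%N.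

Lemma block_start_ge k : (k <= block_start k)%N.
Proof. by elim: k => //= k IHk; have := block_length_gt0 k (block_start k); lia. Qed.

Lemma block_start_mono : {homo block_start : k k' / (k <= k')%N}.
Proof.
by apply: homo_leq => [k|k k' k''|k]; [exact: leqnn | exact: leq_trans | exact: leq_addr].
Qed.

Lemma block_of_subproof i : exists k, (i < block_start k.+1)%N.
Proof. by exists i; apply: block_start_ge. Qed.

Definition block_of i := ex_minn (block_of_subproof i).

Definition concat_blocks i :=
  let k := block_of i in (block k (block_start k)).2 (i - block_start k)%N.

Lemma concat_blocksE k j : (j < (block k (block_start k)).1)%N ->
  concat_blocks (block_start k + j) = (block k (block_start k)).2 j.
Proof.
move=> j_lt; rewrite /concat_blocks.
suff -> : block_of (block_start k + j) = k by rewrite addKn.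
rewrite /block_of; case: ex_minnP => m m_start m_min.
have mk : (m <= k)%N by apply: m_min; rewrite /= ltn_add2l.
apply/eqP; rewrite eqn_leq mk leqNgt; apply/negP => /block_start_mono.
by move: m_start => /=; lia.
Qed.

End concat_blocks.

Section entropy_of_sequences.
Context {d : measure_display} {X : measurableType d} {R : realType}.
Variable mu : probability X R.
Variable K : set (seq (set X)).
Local Open Scope ereal_scope.

Lemma hmu_le_hstar alpha : seqs_in K alpha -> hmu mu alpha <= hstar mu K.
Proof.
move=> alphaK; apply: le_limn_esup => -[|n]; first by rewrite invr0 mulr0 mule0.
rewrite EFinM lee_wpmul2r ?lee_fin ?invr_ge0 //.
by apply: ereal_sup_ubound; exists alpha.
Qed.

Lemma long_block P0 (s : R) (N : nat) : K P0 -> s%:E < hstar mu K ->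
  exists p : nat * (nat -> seq (set X)), [/\ (0 < p.1)%N, forall i, K (p.2 i) &
    (s * (N + p.1)%:R <= Hmu mu (pjoinn p.2 p.1))%R].
Proof.
move=> KP0 s_lt; have [t st t_lt] := lte_EFin_dense s_lt.
have ts_gt0 : (0 < t - s)%R by rewrite subr_gt0.
(* [M (t - s)] exceeds [|s N|], so that [s (N + n) <= t n] for [n >= M]. *)
pose M := (Num.truncn (`|s * N%:R| / (t - s))%R).+1.
have := truncnS_gt (`|s * N%:R| / (t - s))%R; rewrite -/M ltr_pdivrMr // => sN_lt.
have [n Mn tn_lt] := lt_limn_esup_frequently t_lt M.
have n_gt0 : (0 < n%:R :> R)%R by rewrite ltr0n (leq_trans _ Mn).
rewrite lte_pdivlMr // in tn_lt.
have [_ [beta betaK <-]] := ereal_sup_gt tn_lt; rewrite -EFinM lte_fin => tn_lt_H.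
(* [beta i] is only known to lie in [K] for [i < n]. *)
exists (n, fun i => if (i < n)%N then beta i else P0); split => /=.
- by rewrite -(ltr0n R).
- by move=> i; case: ifP => // /betaK.
rewrite (@eq_pjoinn _ _ _ beta); last by move=> i ->.
have : (M%:R * (t - s) <= n%:R * (t - s))%R by rewrite ler_pM2r // ler_nat.
by have := ler_norm (s * N%:R); rewrite natrD; nra.
Qed.

Lemma hstar_le_hmu : K !=set0 -> (forall P, K P -> is_partition P) ->
  exists2 alpha, seqs_in K alpha & hstar mu K <= hmu mu alpha.
Proof.
move=> [P0 KP0] K_part.
have [->|h_gtNy] := eqVneq (hstar mu K) -oo; first by exists (fun=> P0); rewrite ?leNye.
have [|s [s_lt s_approx]] := @EFin_approx_below R (hstar mu K); first by rewrite ltNye.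
pose block k N := sval (cid (long_block N KP0 (s_lt k))).
have blockP k N : [/\ (0 < (block k N).1)%N, forall i, K ((block k N).2 i) &
    (s k * (N + (block k N).1)%:R <= Hmu mu (pjoinn (block k N).2 (block k N).1))%R].
  exact: svalP (cid (long_block N KP0 (s_lt k))).
have block_gt0 k N : (0 < (block k N).1)%N by case: (blockP k N).
pose alpha := concat_blocks block_gt0.
have block_in_K k N i : K ((block k N).2 i) by case: (blockP k N).
have alphaK : seqs_in K alpha by move=> i; exact: block_in_K.
exists alpha => //; apply: lee_EFin_lt => r /s_approx[k0 s_ge].
apply: frequently_le_limn_esup => M; pose k := maxn k0 M.
(* Block k ends at [block_start k.+1], and refining does not lower entropy. *)
have [_ _ H_ge] := blockP k (block_start block k).
have start_ge := block_start_ge block_gt0 k.+1.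
exists (block_start block k.+1); first by move: start_ge; rewrite /k; lia.
rewrite lee_fin ler_pdivlMr ?ltr0n; last exact: leq_ltn_trans start_ge.
apply: le_trans (ler_wpM2r _ (s_ge k _)) _; rewrite ?leq_maxl //.
apply: le_trans H_ge _.
rewrite (@eq_pjoinn _ _ _ (fun j => alpha (block_start block k + j)%N)).
  by apply: Hmu_pjoinn_shift_le => i; exact/K_part/alphaK.
by move=> j j_lt; rewrite /alpha concat_blocksE.
Qed.

End entropy_of_sequences.

Theorem lemma2p3 (d : measure_display) (X : measurableType d) (R : realType)
  (mu : probability X R) (K : set (seq (set X))) :
  standard_prob_space mu ->
  K !=set0 ->
  (forall P, K P -> is_partition P) ->
  hstar mu K = ereal_sup [set hmu mu alpha | alpha in seqs_in K] /\
  exists2 alpha, seqs_in K alpha & hstar mu K = hmu mu alpha.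
Proof.
move=> _ K_neq0 K_part.
have [alpha alphaK h_le] := hstar_le_hmu mu K_neq0 K_part.
have h_eq : hstar mu K = hmu mu alpha.
  by apply/eqP; rewrite eq_le h_le hmu_le_hstar.
split; last by exists alpha.
apply/eqP; rewrite eq_le; apply/andP; split.
  by rewrite h_eq; apply: ereal_sup_ubound; exists alpha.
by apply/ereal_supP => _ [beta betaK <-]; exact: hmu_le_hstar.
Qed.
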